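(* Let $\mathcal C=(X,\{\succsim_i\}_{i\in N\cup\{A\}})$ be a collective choice problem satisfying Generic Finite Alternatives. Then the following holds if and only if $\mathcal C$ is Manipulable: for every game (amendment procedure) with at least $|X|-1$ rounds and for every initial default $x^0\in X$, in every equilibrium the implemented policy is the agenda setter's favorite policy (with probability one).
   Context: Collective choice problem: a set $N=\{1,\dots,n\}$ of voters with $n$ odd and a non-voting agenda setter $A$ choose a policy from a compact metrizable policy space $X$. Each player $i\in N\cup\{A\}$ has a complete, transitive, continuous preference $\succsim_i$ on $X$ with a continuous utility representation $u_i$. Write $x\succsim_M y$ (resp. $x\succ_M y$) if a strict majority of voters weakly (resp. strictly) prefer $x$ to $y$. $X_A^*=\arg\max_{x\in X}u_A(x)$ is the set of the agenda setter's favorite policies. A policy $x$ is Improvable if there is $y$ with $y\succ_A x$ and $y\succ_M x$, and Unimprovable otherwise. $\mathcal C$ is Manipulable if every $x\notin X_A^*$ is Improvable. $\mathcal C$ satisfies Generic Finite Alternatives if $X$ is finite and every $\succsim_i$ ($i\in N\cup\{A\}$) is antisymmetric (strict). Amendment procedure with $T$ rounds: an exogenous initial default $x^0$ is given; in each round $t=1,\dots,T$ the agenda setter proposes $a^t\in X$ (possibly equal to the default), which is put to a simultaneous vote against the current default $x^{t-1}$; if a majority of voters vote yes then $x^t=a^t$, otherwise $x^t=x^{t-1}$; the policy $x^T$ is implemented and determines payoffs. Players observe the full history of proposals and votes and may condition (possibly mixed) actions on it. Equilibrium means subgame perfect equilibrium with as-if-pivotal voting: at any history where, conditional on the proposal passing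 (resp. being rejected), the continuation outcome is $x$ (resp. $y$) irrespective of the composition of the current vote, every voter with a strict preference between $x$ and $y$ votes for the option leading to her preferred outcome. *)

From HB Require Import structures.
From mathcomp Require Import all_boot all_order all_algebra.
From mathcomp Require Import reals.
Set Implicit Arguments. Unset Strict Implicit. Unset Printing Implicit Defensive.
Import Order.TTheory GRing.Theory Num.Theory.
Local Open Scope ring_scope.

Section CollectiveChoice.
Variables (R : realType) (X : finType) (n : nat).

(* Voters are 'I_n; the agenda setter is separate.  Preferences are given by
   utility functions uA : X -> R (setter) and u : 'I_n -> X -> R (voters). *)

Definition strict_majority (u : 'I_n -> X -> R) (x y : X) : bool :=
  (n < 2 * #|[pred i | (u i y < u i x)%R]|)%N.

Definition favorite (uA : X -> R) (x : X) : bool := [forall y, uA y <= uA x].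

Definition improvable (uA : X -> R) (u : 'I_n -> X -> R) (x : X) : Prop :=
  exists y, uA x < uA y /\ strict_majority u y x.

Definition manipulable (uA : X -> R) (u : 'I_n -> X -> R) : Prop :=
  forall x, ~~ favorite uA x -> improvable uA u x.

(* Generic Finite Alternatives: X finite (it is a finType) and all
   preferences strict, i.e. utilities injective. *)
Definition generic_finite_alternatives (uA : X -> R) (u : 'I_n -> X -> R) : Prop :=
  injective uA /\ forall i, injective (u i).

(* vote profile: true = yes *)
Definition vote := {ffun 'I_n -> bool}.
Definition hist := seq (X * vote).

Definition passes (v : vote) : bool := (n < 2 * #|[pred j | v j]|)%N.

Definition default (x0 : X) (h : hist) : X :=
  foldl (fun x e => if passes e.2 then e.1 else x) x0 h.

(* behaviour strategy profile: the setter maps histories to a mixed proposal,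
   voter j maps (history, current proposal) to a probability of voting yes *)
Record profile := Profile {
  pA : hist -> {ffun X -> R};
  pV : 'I_n -> hist -> X -> R }.

Definition validA (f : hist -> {ffun X -> R}) : Prop :=
  forall h, (forall x, 0 <= f h x) /\ \sum_x f h x = 1.
Definition validV (g : hist -> X -> R) : Prop :=
  forall h a, 0 <= g h a <= 1.
Definition valid (s : profile) : Prop :=
  validA (pA s) /\ forall j, validV (pV s j).

Definition vprob (s : profile) (h : hist) (a : X) (v : vote) : R :=
  \prod_(j < n) (if v j then pV s j h a else 1 - pV s j h a).

(* expected value of the terminal payoff f (a function of the implemented
   policy) from history h at the start of a round, with k rounds remaining *)
Fixpoint cval (x0 : X) (s : profile) (f : X -> R) (k : nat) (h : hist) : R :=
  if k is k'.+1 then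
    \sum_(a : X) pA s h a *
      \sum_(v : vote) vprob s h a v * cval x0 s f k' (rcons h (a, v))
  else f (default x0 h).

(* expected value of f from the voting node (h, a), k rounds remaining after
   the current one *)
Definition sval (x0 : X) (s : profile) (f : X -> R) (k : nat) (h : hist) (a : X) : R :=
  \sum_(v : vote) vprob s h a v * cval x0 s f k (rcons h (a, v)).

Definition indicator (x : X) : X -> R := fun z => (z == x)%:R.

(* players: None = agenda setter, Some i = voter i *)
Definition player := option 'I_n.

Definition payoff (uA : X -> R) (u : 'I_n -> X -> R) (p : player) : X -> R :=
  match p with None => uA | Some i => u i end.

Definition unilateral (p : player) (s s' : profile) : Prop :=
  valid s' /\ (p != None -> pA s' = pA s) /\
  (forall j, p != Some j -> pV s' j = pV s j).

Definition as_if_pivotal (x0 : X) (T : nat) (u : 'I_n -> X -> R) (s : profile) : Prop :=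
  forall (h : hist) (a x y : X), (size h < T)%N ->
    (forall v, passes v -> cval x0 s (indicator x) (T - size h).-1 (rcons h (a, v)) = 1) ->
    (forall v, ~~ passes v -> cval x0 s (indicator y) (T - size h).-1 (rcons h (a, v)) = 1) ->
    forall i, (u i y < u i x -> pV s i h a = 1) /\ (u i x < u i y -> pV s i h a = 0).

(* subgame perfect equilibrium (no profitable unilateral deviation in any
   subgame: those starting at the setter's node h and those starting at the
   voting node (h, a)) with as-if-pivotal voting, in the T-round game with
   initial default x0 *)
Definition equilibrium (x0 : X) (T : nat) (uA : X -> R) (u : 'I_n -> X -> R)
    (s : profile) : Prop :=
  [/\ valid s,
      (forall (p : player) (s' : profile) (h : hist), unilateral p s s' ->
         (size h < T)%N ->
         cval x0 s' (payoff uA u p) (T - size h) h <=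
         cval x0 s (payoff uA u p) (T - size h) h),
      (forall (p : player) (s' : profile) (h : hist) (a : X), unilateral p s s' ->
         (size h < T)%N ->
         sval x0 s' (payoff uA u p) (T - size h).-1 h a <=
         sval x0 s (payoff uA u p) (T - size h).-1 h a)
    & as_if_pivotal x0 T u s].

Definition prob_favorite (x0 : X) (T : nat) (uA : X -> R) (s : profile) : R :=
  cval x0 s (fun z => (favorite uA z)%:R) T [::].

End CollectiveChoice.

From Pilot Require Import Defs.
From HB Require Import structures.
From mathcomp Require Import all_boot all_order all_algebra.
From mathcomp Require Import reals.
Set Implicit Arguments. Unset Strict Implicit. Unset Printing Implicit Defensive.
Import Order.TTheory GRing.Theory Num.Theory.
Local Open Scope ring_scope.

(** The whole game is governed by one map: [setter_step z] is the setter's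
    favourite among [z] and the policies that a strict majority prefers to [z].
    By backward induction on the number of remaining rounds, every equilibrium
    of the [k]-round game with default [d] implements [outcome k d], the [k]-th
    iterate of [setter_step] at [d]: voting as if pivotal, a majority approves a
    proposal [a] exactly when it prefers [outcome k a] to [outcome k d], so
    proposing [setter_step d] secures [outcome k.+1 d], which beats every other
    vote outcome for the setter, and strict preferences leave no other optimal
    choice. The profile prescribing this behaviour is itself an equilibrium.
    If the problem is Manipulable, [setter_step] strictly raises the setter's
    utility at each non-favourite policy, so a favourite is reached within
    [#|X| - 1] rounds. Conversely an Unimprovable non-favourite [x] is fixed by
    [setter_step], and the game started at [x] implements [x]. *)

Section WeightedSums.
Variables (R : numDomainType) (I : finType) (p : I -> R).
Hypotheses (p_ge0 : forall i, 0 <= p i) (p_sum1 : \sum_i p i = 1).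

Lemma weighted_sum_eq (g : I -> R) c :
  (forall i, p i != 0 -> g i = c) -> \sum_i p i * g i = c.
Proof.
move=> g_supp; rewrite (eq_bigr (fun i => p i * c)); last first.
  by move=> i _; have [->|/g_supp->] := eqVneq (p i) 0; rewrite ?mul0r.
by rewrite -big_distrl /= p_sum1 mul1r.
Qed.

Lemma weighted_sum_le (g : I -> R) c :
  (forall i, p i != 0 -> g i <= c) -> \sum_i p i * g i <= c.
Proof.
move=> g_supp; apply: (@le_trans _ _ (\sum_i p i * c)).
  apply: ler_sum => i _; have [->|/g_supp le_gc] := eqVneq (p i) 0.
    by rewrite !mul0r.
  exact: ler_wpM2l.
by rewrite -big_distrl /= p_sum1 mul1r.
Qed.

Lemma weighted_sum_ge_max (g : I -> R) c :
  (forall i, g i <= c) -> c <= \sum_i p i * g i -> forall i, p i != 0 -> g i = c.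
Proof.
move=> g_le c_le i pi_neq0.
have gap_ge0 j : true -> 0 <= p j * (c - g j) by rewrite mulr_ge0 ?subr_ge0.
have gap_sum0 : \sum_j p j * (c - g j) = 0.
  apply/eqP; rewrite eq_le sumr_ge0 // andbT.
  under eq_bigr do rewrite mulrBr.
  by rewrite sumrB -big_distrl /= p_sum1 mul1r subr_le0.
move/eqP: (psumr_eq0P gap_ge0 gap_sum0 (i := i) isT).
by rewrite mulf_eq0 (negbTE pi_neq0) subr_eq0 => /eqP.
Qed.

End WeightedSums.

Definition point_mass (R : numDomainType) (X : finType) (c : X) : {ffun X -> R} :=
  [ffun a => (a == c)%:R].

Lemma point_mass_distr (R : numDomainType) (X : finType) (c : X) :
  (forall a, 0 <= point_mass R c a) /\ \sum_a point_mass R c a = 1.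
Proof.
rewrite /point_mass; split=> [a|]; first by rewrite ffunE ler0n.
rewrite (bigD1 c) //= ffunE eqxx big1 ?addr0 // => a /negbTE a_neq_c.
by rewrite ffunE a_neq_c.
Qed.

Lemma point_mass_supp (R : numDomainType) (X : finType) (c a : X) :
  point_mass R c a != 0 -> a = c.
Proof. by rewrite /point_mass ffunE; case: (a =P c) => //= _; rewrite mulr0n eqxx. Qed.

Section GameTree.
Variables (R : realType) (X : finType) (n : nat).
Implicit Types (s : profile R X n) (h : hist X n) (v : vote n).

Lemma default_rcons x0 h a v :
  default x0 (rcons h (a, v)) = if passes v then a else default x0 h.
Proof. by rewrite /default foldl_rcons. Qed.

Lemma indicator_eq1 (x y : X) : indicator R x y = 1 -> y = x.
Proof. by rewrite /indicator; case: eqP => // _ /eqP; rewrite eq_sym oner_eq0. Qed.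

Lemma vprob_ge0 s : valid s -> forall h a v, 0 <= vprob s h a v.
Proof.
move=> [_ vV] h a v; apply: prodr_ge0 => j _; have /andP[p_ge0 p_le1] := vV j h a.
by case: (v j); rewrite ?subr_ge0.
Qed.

Lemma sum_vprob s h a : \sum_v vprob s h a v = 1.
Proof.
rewrite /vprob -(bigA_distr_bigA (fun j (b : bool) => if b then pV s j h a else 1 - pV s j h a)).
by apply: big1 => j _; rewrite big_bool /= addrC subrK.
Qed.

Lemma vprob_eq0 s h a v j (b : bool) :
  pV s j h a = b%:R -> v j != b -> vprob s h a v = 0.
Proof.
move=> pV_j v_j; rewrite /vprob (bigD1 j) //= {}pV_j.
by move: v_j; case: (v j); case: b => //= _; rewrite ?subrr mul0r.
Qed.

Lemma vprob_pure s h a (b : vote n) :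
  (forall j, pV s j h a = (b j)%:R) -> forall v, vprob s h a v = (v == b)%:R.
Proof.
move=> pV_b v; have [->|/eqP v_neq_b] := eqVneq v b.
  by apply: big1 => j _; rewrite pV_b; case: (b j); rewrite ?subr0.
have [j v_j] : exists j, v j != b j.
  by apply/existsP; apply: contra_notT v_neq_b => /existsPn v_eq; apply/ffunP => j; apply/eqP/negPn.
by rewrite (vprob_eq0 (pV_b j) v_j).
Qed.

Lemma passes_mono v (w : vote n) : (forall j, v j -> w j) -> passes v -> passes w.
Proof.
move=> v_le_w; rewrite /passes => /leq_trans; apply; rewrite leq_mul2l.
by apply/orP; right; apply/subset_leq_card/subsetP => j; rewrite !inE; apply: v_le_w.
Qed.

Lemma passes_none : ~~ passes ([ffun=> false] : vote n).
Proof. by rewrite /passes (@eq_card _ _ pred0) ?card0 // => j; rewrite !inE ffunE. Qed.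

Lemma passes_all : (0 < n)%N -> passes ([ffun=> true] : vote n).
Proof.
move=> n_gt0; rewrite /passes (@eq_card _ _ predT) => [|j]; last by rewrite !inE ffunE.
by rewrite cardT size_enum_ord mul2n -addnn -{1}(addn0 n) ltn_add2l.
Qed.

Lemma cvalS x0 s f k h :
  cval x0 s f k.+1 h = \sum_a pA s h a * Defs.sval x0 s f k h a.
Proof. by []. Qed.

Lemma cval_eq_from x0 s s' m f :
  (forall h, (m <= size h)%N -> pA s' h = pA s h /\ forall j, pV s' j h = pV s j h) ->
  forall k h, (m <= size h)%N -> cval x0 s' f k h = cval x0 s f k h.
Proof.
move=> agree; elim=> [//|k IH] h le_m; have [eq_pA eq_pV] := agree h le_m.
rewrite !cvalS eq_pA; apply: eq_bigr => a _; congr (_ * _); apply: eq_bigr => v _.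
rewrite IH ?size_rcons ?(leq_trans le_m) //; congr (_ * _).
by apply: eq_bigr => j _; rewrite eq_pV.
Qed.

Variable u : 'I_n -> X -> R.

Definition sincere_votes (x y : X) : vote n := [ffun j => u j y < u j x].

Lemma passes_sincere x y : passes (sincere_votes x y) = strict_majority u x y.
Proof.
by rewrite /passes /strict_majority; congr (_ < _ * _)%N; apply: eq_card => j; rewrite !inE ffunE.
Qed.

Lemma sincere_vote_dominant i x y v :
  (forall j, j != i -> v j = sincere_votes x y j) ->
  u i (if passes v then x else y) <= u i (if passes (sincere_votes x y) then x else y).
Proof.
move=> v_others.
case pass_v: (passes v); case pass_s: (passes (sincere_votes x y)) => //.
- rewrite leNgt; apply: contraFN pass_s => lt_yx; apply: passes_mono pass_v => j.
  by have [->|/v_others->] := eqVneq j i; rewrite ffunE.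
- rewrite leNgt; apply: contraFN pass_v => lt_xy; apply: passes_mono pass_s => j.
  have [->|/v_others->//] := eqVneq j i; by rewrite ffunE ltNge (ltW lt_xy).
Qed.

End GameTree.

Section AmendmentAgenda.
Variables (R : realType) (X : finType) (n : nat) (uA : X -> R) (u : 'I_n -> X -> R).

Definition winset (z y : X) : bool := (y == z) || strict_majority u y z.

Definition setter_step (z : X) : X := Order.arg_max z (winset z) uA.

Definition outcome (k : nat) (d : X) : X := iter k setter_step d.

Definition vote_outcome (k : nat) (d a : X) : X :=
  if strict_majority u (outcome k a) (outcome k d) then outcome k a else outcome k d.

Definition setter_rank (z : X) : nat := #|[pred x | uA x < uA z]|.

Lemma outcomeS k d : outcome k.+1 d = setter_step (outcome k d).
Proof. by []. Qed.

Lemma outcomeSr k d : outcome k.+1 d = outcome k (setter_step d).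
Proof. exact: iterSr. Qed.

Lemma setter_stepP z :
  winset z (setter_step z) /\ forall y, winset z y -> uA y <= uA (setter_step z).
Proof.
rewrite /setter_step; case: arg_maxP => [|m Wm m_max]; first by rewrite /winset eqxx.
by split=> // y /m_max.
Qed.

Lemma le_setter_step z : uA z <= uA (setter_step z).
Proof. by apply: (setter_stepP z).2; rewrite /winset eqxx. Qed.

Lemma vote_outcome_le k d a : uA (vote_outcome k d a) <= uA (outcome k.+1 d).
Proof.
rewrite /vote_outcome outcomeS; case: ifP => [maj|_]; last exact: le_setter_step.
by apply: (setter_stepP _).2; rewrite /winset maj orbT.
Qed.

Lemma vote_outcome_step k d : vote_outcome k d (setter_step d) = outcome k.+1 d.
Proof.
rewrite /vote_outcome -outcomeSr outcomeS.
by case: (setter_stepP (outcome k d)) => /orP[/eqP->|->] _; first by case: ifP.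
Qed.

Lemma lt_setter_step z : manipulable uA u -> ~~ favorite uA z -> uA z < uA (setter_step z).
Proof.
move=> manip /manip [y [lt_zy maj_yz]]; apply: (lt_le_trans lt_zy).
by apply: (setter_stepP z).2; rewrite /winset maj_yz orbT.
Qed.

Lemma setter_rank_lt z : ~~ favorite uA z -> (setter_rank z < #|X| - 1)%N.
Proof.
case/forallPn=> y; rewrite -ltNge => lt_zy.
have y_neq_z : y != z by apply: contraTneq lt_zy => ->; rewrite ltxx.
rewrite ltn_subRL /setter_rank.
have := max_card [predU1 y & [predU1 z & [pred x | uA x < uA z]]].
by rewrite !cardU1 !inE (negbTE y_neq_z) (lt_gtF lt_zy) ltxx.
Qed.

Lemma setter_rank_mono y z : uA z < uA y -> (setter_rank z < setter_rank y)%N.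
Proof.
move=> lt_zy; rewrite /setter_rank.
apply: (@leq_trans #|[predU1 z & [pred x | uA x < uA z]]|).
  by rewrite cardU1 inE ltxx.
apply/subset_leq_card/subsetP => x; rewrite !inE => /orP[/eqP-> //|lt_xz].
exact: lt_trans lt_zy.
Qed.

Lemma improvableP x :
  reflect (improvable uA u x) [exists y, (uA x < uA y) && strict_majority u y x].
Proof.
by apply: (iffP existsP) => [[y /andP[lt maj]]|[y [lt maj]]]; exists y; rewrite ?lt ?maj.
Qed.

Lemma strict_majorityxx x : strict_majority u x x = false.
Proof.
by rewrite /strict_majority (@eq_card _ _ pred0) ?card0 // => i; rewrite !inE ltxx.
Qed.

Hypothesis uA_inj : injective uA.

Lemma setter_step_favorite z : favorite uA z -> setter_step z = z.
Proof.
by move=> /forallP z_max; apply/uA_inj/eqP; rewrite eq_le le_setter_step z_max.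
Qed.

Lemma setter_step_unimprovable z : ~ improvable uA u z -> setter_step z = z.
Proof.
move=> unimp; case: (setter_stepP z) => /orP[/eqP-> //|maj] _; case: unimp.
exists (setter_step z); split=> //; rewrite lt_neqAle le_setter_step andbT.
by apply: contraTneq maj => /uA_inj <-; rewrite strict_majorityxx.
Qed.

Lemma outcome_unimprovable k z : ~ improvable uA u z -> outcome k z = z.
Proof.
by move=> unimp; elim: k => // k IH; rewrite outcomeS IH setter_step_unimprovable.
Qed.

Lemma outcome_rank k d :
  manipulable uA u -> ~~ favorite uA (outcome k d) -> (k <= setter_rank (outcome k d))%N.
Proof.
move=> manip; elim: k => // k IH; rewrite outcomeS => nfav.
have nfav_k : ~~ favorite uA (outcome k d).
  by apply: contra nfav => fav; rewrite setter_step_favorite.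
exact: leq_ltn_trans (IH nfav_k) (setter_rank_mono (lt_setter_step manip nfav_k)).
Qed.

Lemma outcome_favorite T d :
  manipulable uA u -> (#|X| - 1 <= T)%N -> favorite uA (outcome T d).
Proof.
move=> manip le_T; apply: contraT => nfav.
by have := leq_trans le_T (outcome_rank manip nfav); rewrite leqNgt setter_rank_lt.
Qed.

Definition plays_outcome x0 (s : profile R X n) k (h : hist X n) : Prop :=
  forall f, cval x0 s f k h = f (outcome k (default x0 h)).

Lemma sval_vote_outcome x0 (s : profile R X n) h k a :
  (forall v, plays_outcome x0 s k (rcons h (a, v))) ->
  (outcome k a != outcome k (default x0 h) ->
     forall j, pV s j h a = (sincere_votes u (outcome k a) (outcome k (default x0 h)) j)%:R) ->
  forall f, Defs.sval x0 s f k h a = f (vote_outcome k (default x0 h) a).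
Proof.
move=> cont votes f; rewrite /Defs.sval; set d := default x0 h.
under eq_bigr do rewrite cont default_rcons.
have [eq_out|/votes/vprob_pure pure] := eqVneq (outcome k a) (outcome k d).
  apply: (weighted_sum_eq (sum_vprob s h a)) => v _.
  by rewrite /vote_outcome; case: ifP; case: ifP; rewrite ?eq_out.
apply: (weighted_sum_eq (sum_vprob s h a)) => v; rewrite pure pnatr_eq0 eqb0 negbK => /eqP->.
by rewrite passes_sincere /vote_outcome; case: ifP.
Qed.

Lemma plays_outcomeS x0 (s : profile R X n) h k :
  valid s ->
  (forall a f, Defs.sval x0 s f k h a = f (vote_outcome k (default x0 h) a)) ->
  (forall a, pA s h a != 0 -> vote_outcome k (default x0 h) a = outcome k.+1 (default x0 h)) ->
  plays_outcome x0 s k.+1 h.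
Proof.
move=> [vA _] sv setter f; rewrite cvalS.
by apply: (weighted_sum_eq (vA h).2) => a /setter <-; apply: sv.
Qed.

Lemma rounds_left T (h : hist X n) k : (size h + k.+1 = T)%N -> (T - size h).-1 = k.
Proof. by move<-; rewrite addKn. Qed.

Lemma size_rounds_left T (h : hist X n) :
  (size h < T)%N -> (size h + (T - size h).-1.+1 = T)%N.
Proof. by move=> lt_h; rewrite prednK ?subn_gt0 // subnKC // ltnW. Qed.

Definition canonical_profile x0 T : profile R X n :=
  Profile (fun h => point_mass R (setter_step (default x0 h)))
          (fun i h a => let k := (T - size h).-1 in
             (sincere_votes u (outcome k a) (outcome k (default x0 h)) i)%:R).

Lemma canonical_valid x0 T : valid (canonical_profile x0 T).
Proof.
split=> [h|j h a]; first exact: point_mass_distr.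
by rewrite /= ffunE; case: (_ < _); rewrite /= ?lexx ?ler01.
Qed.

Lemma canonical_plays_outcome x0 T k h :
  (size h + k = T)%N -> plays_outcome x0 (canonical_profile x0 T) k h.
Proof.
elim: k h => [//|k IH] h size_h.
apply: plays_outcomeS => [|a|a /point_mass_supp ->];
  [exact: canonical_valid | | exact: vote_outcome_step].
apply: sval_vote_outcome => [v|_ j]; first by apply: IH; rewrite size_rcons addSnnS.
by rewrite /= (rounds_left size_h).
Qed.

Lemma canonical_sval x0 T k h a : (size h + k.+1 = T)%N ->
  forall f, Defs.sval x0 (canonical_profile x0 T) f k h a = f (vote_outcome k (default x0 h) a).
Proof.
move=> size_h; apply: sval_vote_outcome => [v|_ j].
  by apply: canonical_plays_outcome; rewrite size_rcons addSnnS.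
by rewrite /= (rounds_left size_h).
Qed.

Lemma canonical_sval_deviation_le x0 T p s' h k a :
  unilateral p (canonical_profile x0 T) s' -> (size h + k.+1 = T)%N ->
  (forall v, cval x0 s' (payoff uA u p) k (rcons h (a, v)) <=
             payoff uA u p (outcome k (default x0 (rcons h (a, v))))) ->
  Defs.sval x0 s' (payoff uA u p) k h a <= payoff uA u p (vote_outcome k (default x0 h) a).
Proof.
move=> [valid' [_ pV']] size_h cont; set d := default x0 h.
set b := sincere_votes u (outcome k a) (outcome k d).
have others v : vprob s' h a v != 0 -> forall j, p != Some j -> v j = b j.
  move=> v_neq0 j p_j; apply/eqP; apply: contraNT v_neq0 => v_j; apply/eqP.
  by apply: vprob_eq0 v_j; rewrite pV' //= (rounds_left size_h).
apply: (@le_trans _ _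
  (\sum_v vprob s' h a v * payoff uA u p (outcome k (if passes v then a else d)))).
  apply: ler_sum => v _; rewrite -default_rcons.
  by apply: ler_wpM2l; [apply: vprob_ge0 | apply: cont].
apply: (weighted_sum_le (vprob_ge0 valid' h a) (sum_vprob s' h a)) => v /others v_b.
have -> : vote_outcome k d a = outcome k (if passes b then a else d).
  by rewrite passes_sincere /vote_outcome; case: ifP.
rewrite !(fun_if (outcome k)); case: p v_b {pV' cont others} => [i|] v_b /=.
  by apply: sincere_vote_dominant => j j_i; apply: v_b; rewrite /= eq_sym.
by have -> : v = b by apply/ffunP => j; apply: v_b.
Qed.

Lemma canonical_cval_deviation_le x0 T p s' k h :
  unilateral p (canonical_profile x0 T) s' -> (size h + k = T)%N ->
  cval x0 s' (payoff uA u p) k h <= payoff uA u p (outcome k (default x0 h)).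
Proof.
move=> dev; have [[vA' _] [pA' _]] := dev.
elim: k h => [|k IH] h size_h; first exact: lexx.
rewrite cvalS; set d := default x0 h.
apply: (@le_trans _ _ (\sum_a pA s' h a * payoff uA u p (vote_outcome k d a))).
  apply: ler_sum => a _; apply: ler_wpM2l; first exact: (vA' h).1.
  by apply: (canonical_sval_deviation_le dev size_h) => v; apply: IH; rewrite size_rcons addSnnS.
apply: (weighted_sum_le (vA' h).1 (vA' h).2) => a.
case: p dev pA' {IH} => [i|] _ pA' /=; last by move=> _; apply: vote_outcome_le.
by rewrite pA' //= => /point_mass_supp ->; rewrite vote_outcome_step.
Qed.

Lemma canonical_as_if_pivotal x0 T : (0 < n)%N -> as_if_pivotal x0 T u (canonical_profile x0 T).
Proof.
move=> n_gt0 h a x y lt_h pass fail i.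
have size_h := size_rounds_left lt_h; set k := (T - size h).-1 in pass fail size_h *.
have plays v : plays_outcome x0 (canonical_profile x0 T) k (rcons h (a, v)).
  by apply: canonical_plays_outcome; rewrite size_rcons addSnnS.
have out_x : outcome k a = x.
  have := pass _ (passes_all n_gt0).
  by rewrite plays default_rcons passes_all //; apply: indicator_eq1.
have out_y : outcome k (default x0 h) = y.
  have := fail _ (passes_none n).
  by rewrite plays default_rcons (negbTE (passes_none n)); apply: indicator_eq1.
rewrite /= -/k ffunE out_x out_y; split=> [->//|lt_xy].
by rewrite lt_gtF.
Qed.

Lemma canonical_equilibrium x0 T :
  (0 < n)%N -> equilibrium x0 T uA u (canonical_profile x0 T).
Proof.
move=> n_gt0; split; [exact: canonical_valid | | | exact: canonical_as_if_pivotal].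
  move=> p s' h dev lt_h; have size_h : (size h + (T - size h) = T)%N by rewrite subnKC // ltnW.
  by rewrite canonical_plays_outcome //; apply: canonical_cval_deviation_le dev size_h.
move=> p s' h a dev /size_rounds_left size_h; rewrite canonical_sval //.
apply: (canonical_sval_deviation_le dev size_h) => v.
by apply: canonical_cval_deviation_le dev _; rewrite size_rcons addSnnS.
Qed.

Hypothesis u_inj : forall i, injective (u i).

Lemma pivotal_votes x0 T (s : profile R X n) h k a :
  as_if_pivotal x0 T u s -> (size h + k.+1 = T)%N ->
  (forall v, plays_outcome x0 s k (rcons h (a, v))) ->
  outcome k a != outcome k (default x0 h) ->
  forall j, pV s j h a = (sincere_votes u (outcome k a) (outcome k (default x0 h)) j)%:R.
Proof.
move=> piv size_h cont out_neq j; set d := default x0 h.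
have lt_h : (size h < T)%N by rewrite -size_h addnS ltnS leq_addr.
have pass v :
    passes v -> cval x0 s (indicator R (outcome k a)) (T - size h).-1 (rcons h (a, v)) = 1.
  by move=> pass_v; rewrite (rounds_left size_h) cont default_rcons pass_v /indicator eqxx.
have fail v :
    ~~ passes v -> cval x0 s (indicator R (outcome k d)) (T - size h).-1 (rcons h (a, v)) = 1.
  move=> fail_v.
  by rewrite (rounds_left size_h) cont default_rcons (negbTE fail_v) /indicator eqxx.
have [vote_yes vote_no] := piv h a _ _ lt_h pass fail j.
rewrite ffunE; case: ltgtP => [/vote_yes|/vote_no|/u_inj eq_out] //.
by rewrite eq_out eqxx in out_neq.
Qed.

Lemma setter_proposes_best x0 T (s : profile R X n) h k :
  equilibrium x0 T uA u s -> (size h + k.+1 = T)%N ->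
  (forall a f, Defs.sval x0 s f k h a = f (vote_outcome k (default x0 h) a)) ->
  forall a, pA s h a != 0 -> vote_outcome k (default x0 h) a = outcome k.+1 (default x0 h).
Proof.
move=> [[vA vV] no_dev _ _] size_h sv a pa_neq0; set d := default x0 h.
have lt_h : (size h < T)%N by rewrite -size_h addnS ltnS leq_addr.
(* Deviating at [h] alone to propose [setter_step d] secures [outcome k.+1 d],
   an upper bound of every vote outcome. *)
pose s' := Profile (fun h' => if h' == h then point_mass R (setter_step d) else pA s h') (pV s).
have dev : unilateral None s s'.
  split; last by split.
  split=> [h'|]; last exact: vV.
  by rewrite /=; case: eqP => _; [apply: point_mass_distr | apply: vA].
have s'_val : cval x0 s' uA k.+1 h = uA (outcome k.+1 d).
  rewrite cvalS /= eqxx; apply: (weighted_sum_eq (point_mass_distr _ _).2) => b /point_mass_supp ->.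
  rewrite -outcomeS -vote_outcome_step -(sv _ uA) /Defs.sval; apply: eq_bigr => v _; congr (_ * _).
  apply: (@cval_eq_from _ _ _ x0 s s' (size h).+1) => [h' lt_h'|]; last by rewrite size_rcons.
  by rewrite /= ifN //; apply: contraTneq lt_h' => ->; rewrite ltnn.
have := no_dev None s' h dev lt_h; rewrite (_ : T - size h = k.+1)%N; last by rewrite -size_h addKn.
rewrite s'_val cvalS (eq_bigr _ (fun b _ => congr1 (GRing.mul _) (sv b uA))) => best_le.
apply: uA_inj; exact: (weighted_sum_ge_max (vA h).1 (vA h).2 (vote_outcome_le k d) best_le) pa_neq0.
Qed.

Lemma equilibrium_plays_outcome x0 T (s : profile R X n) k h :
  equilibrium x0 T uA u s -> (size h + k = T)%N -> plays_outcome x0 s k h.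
Proof.
move=> eqm; have [valid_s _ _ piv] := eqm.
elim: k h => [//|k IH] h size_h.
have cont a v : plays_outcome x0 s k (rcons h (a, v)) by apply: IH; rewrite size_rcons addSnnS.
have sv a : forall f, Defs.sval x0 s f k h a = f (vote_outcome k (default x0 h) a).
  by apply: sval_vote_outcome (cont a) (pivotal_votes piv size_h (cont a)).
by apply: plays_outcomeS => //; apply: setter_proposes_best eqm size_h sv.
Qed.

End AmendmentAgenda.

Theorem theorem1 (R : realType) (X : finType) (n : nat)
    (uA : X -> R) (u : 'I_n -> X -> R) :
  odd n ->
  generic_finite_alternatives uA u ->
  (forall (T : nat) (x0 : X) (s : profile R X n),
      (#|X| - 1 <= T)%N ->
      equilibrium x0 T uA u s ->
      prob_favorite x0 T uA s = 1)
  <-> manipulable uA u.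
Proof.
move=> odd_n [uA_inj u_inj]; split=> [all_fav x nfav_x|manip T x0 s le_T eqm].
  apply/improvableP; apply: contraNT nfav_x => /improvableP unimp.
  have := all_fav _ x _ (leqnn _) (canonical_equilibrium uA u x _ (odd_gt0 odd_n)).
  rewrite /prob_favorite canonical_plays_outcome // outcome_unimprovable //.
  by case: favorite => // /eqP; rewrite eq_sym oner_eq0.
by rewrite /prob_favorite (equilibrium_plays_outcome uA_inj u_inj eqm) ?outcome_favorite.
Qed.
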